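(* Let $K_{1,n}$ be the star with $n\geq 3$ leaves and let $p\geq 2$ be an integer. Then $C_{p,1}^T(K_{1,n})\leq n+2p-1$.
   Context: For an integer $p$, a $(p,1)$-total labelling of a graph $G$ is a function $c$ from $V(G)\cup E(G)$ to the nonnegative integers such that $c(u)\neq c(v)$ whenever $uv\in E(G)$, $c(e)\neq c(e')$ whenever $e,e'$ are distinct edges sharing an endpoint, and $|c(u)-c(e)|\geq p$ whenever vertex $u$ is incident to edge $e$. A list assignment $L$ assigns to every $x\in V(G)\cup E(G)$ a set $L(x)$ of nonnegative integers; $G$ is $L$-$(p,1)$-total labelable if it has a $(p,1)$-total labelling $c$ with $c(x)\in L(x)$ for all $x$. The $(p,1)$-total labelling choosability $C_{p,1}^T(G)$ is the minimum $k$ such that $G$ is $L$-$(p,1)$-total labelable for every list assignment $L$ with $|L(x)|=k$ for all $x\in V(G)\cup E(G)$. *)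

From mathcomp Require Import all_boot.
Set Implicit Arguments. Unset Strict Implicit. Unset Printing Implicit Defensive.

(* A simple graph: vertex set a finType T, symmetric irreflexive adjacency adj.
   Edges are the 2-element vertex sets {u,v} with adj u v. *)
Definition is_edge (T : finType) (adj : rel T) (f : {set T}) : bool :=
  [exists u, exists v, adj u v && (f == [set u; v])].

(* (p,1)-total labelling: vertex labels cv, edge labels ce (only meaningful on edges). *)
Definition is_total_labelling (T : finType) (adj : rel T) (p : nat)
    (cv : T -> nat) (ce : {set T} -> nat) : Prop :=
  [/\ (forall u v, adj u v -> cv u != cv v),
      (forall f g, is_edge adj f -> is_edge adj g -> f != g ->
         f :&: g != set0 -> ce f != ce g)
    & (forall u f, is_edge adj f -> u \in f ->
         (cv u + p <= ce f) || (ce f + p <= cv u))].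

Definition total_labelable (T : finType) (adj : rel T) (p : nat)
    (Lv : T -> seq nat) (Le : {set T} -> seq nat) : Prop :=
  exists cv ce, is_total_labelling adj p cv ce /\
    (forall v, cv v \in Lv v) /\ (forall f, is_edge adj f -> ce f \in Le f).

Definition total_choosable (T : finType) (adj : rel T) (p k : nat) : Prop :=
  forall (Lv : T -> seq nat) (Le : {set T} -> seq nat),
    (forall v, uniq (Lv v) /\ size (Lv v) = k) ->
    (forall f, is_edge adj f -> uniq (Le f) /\ size (Le f) = k) ->
    total_labelable adj p Lv Le.

(* The star K_{1,n}: centre None, leaves Some i, i < n. *)
Definition star_adj (n : nat) : rel (option 'I_n) :=
  fun u v => ((u == None) && (v != None)) || ((v == None) && (u != None)).

From mathcomp Require Import all_boot zify.
Set Implicit Arguments. Unset Strict Implicit. Unset Printing Implicit Defensive.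

(* Label the centre by any x in its list.  At most 2p - 1 labels lie within
   distance p of x, so every edge list keeps at least n labels far from x, and n
   edges with n candidates each get pairwise distinct labels greedily.  A leaf
   must then avoid x and the at most 2p - 1 labels near its edge label: at most
   2p values, fewer than the n + 2p - 1 in its list. *)

Definition far (p a b : nat) : bool := (a + p <= b) || (b + p <= a).

Lemma farC p : symmetric (far p).
Proof. by move=> a b; rewrite /far orbC. Qed.

Lemma count_not_far_le p x (s : seq nat) :
  uniq s -> count (predC (far p x)) s <= 2 * p - 1.
Proof.
move=> s_uniq; rewrite -size_filter.
have -> : 2 * p - 1 = size (iota (x - (p - 1)) (2 * p - 1)) by rewrite size_iota.
apply: uniq_leq_size; first by rewrite filter_uniq.
move=> y; rewrite mem_filter mem_iota /= /far negb_or -!ltnNge => /andP[/andP[]]; lia.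
Qed.

Lemma size_filter_far_ge p x (s : seq nat) :
  uniq s -> size s - (2 * p - 1) <= size (filter (far p x) s).
Proof.
move/(count_not_far_le p x); rewrite size_filter -(count_predC (far p x) s); lia.
Qed.

Lemma exists_far_label_neq p x c (s : seq nat) :
  0 < p -> uniq s -> 2 * p < size s -> exists2 y, y \in s & (y != x) && far p y c.
Proof.
move=> p_gt0 s_uniq s_large; apply/hasP; rewrite has_count.
set ok := fun y => _; rewrite -(count_predC ok s) in s_large.
have forbidden : count (predC ok) s <= 2 * p.
  have -> : count (predC ok) s = count (predU (pred1 x) (predC (far p c))) s.
    by apply: eq_count => y; rewrite /= negb_and negbK farC.
  apply: leq_trans (leq_addr (count (predI (pred1 x) (predC (far p c))) s) _) _.
  rewrite count_predUI count_uniq_mem //.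
  by apply: leq_trans (leq_add (leq_b1 _) (count_not_far_le p c s_uniq)) _; lia.
lia.
Qed.

Lemma exists_injective_choice (I : eqType) (L : I -> seq nat) (r : seq I) :
  uniq r -> (forall i, i \in r -> uniq (L i) /\ size r <= size (L i)) ->
  exists g : I -> nat, (forall i, i \in r -> g i \in L i) /\ {in r &, injective g}.
Proof.
elim: r => [|i r IHr] /=; first by exists (fun=> 0); split.
case/andP=> i_notin_r r_uniq L_large.
have [|g [gL g_inj]] := IHr r_uniq.
  move=> j j_r; have /L_large[? ?] : j \in i :: r by rewrite inE j_r orbT.
  by split=> //; apply: ltnW.
have [y yL y_new] : exists2 y, y \in L i & y \notin map g r.
  apply/hasP/negPn/negP => /hasPn L_used; have [Li_uniq Li_large] := L_large i (mem_head _ _).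
  have := uniq_leq_size Li_uniq (fun y yL => negbNE (L_used y yL)).
  by rewrite size_map leqNgt Li_large.
have neq_i j : j \in r -> (j == i) = false.
  by move=> j_r; apply: contraNF i_notin_r => /eqP <-.
exists (fun j => if j == i then y else g j); split.
  by move=> j; rewrite inE; case: eqP => [-> | _] //= /gL.
move=> j k; rewrite !inE => /predU1P[-> | j_r] /predU1P[-> | k_r]; rewrite ?eqxx ?neq_i //.
- by move=> y_gk; case/negP: y_new; rewrite y_gk map_f.
- by move=> gj_y; case/negP: y_new; rewrite -gj_y map_f.
- exact: g_inj.
Qed.

Lemma star_edgeP n (f : {set option 'I_n}) :
  is_edge (@star_adj n) f -> exists i, f = [set None; Some i].
Proof.
case/existsP=> u /existsP[v /andP[adj_uv /eqP ->]]; move: adj_uv; rewrite /star_adj.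
by case: u => [i|]; case: v => [j|] //= _; [exists i; rewrite setUC | exists j].
Qed.

Lemma star_edge n (i : 'I_n) : is_edge (@star_adj n) [set None; Some i].
Proof. by apply/existsP; exists None; apply/existsP; exists (Some i); rewrite eqxx. Qed.

Section StarLabelling.

Variables (n p x : nat) (g h : 'I_n -> nat).

Definition star_vlabel (u : option 'I_n) : nat := if u is Some i then h i else x.

Definition star_elabel (f : {set option 'I_n}) : nat :=
  if [pick i | Some i \in f] is Some i then g i else 0.

Lemma star_elabel_edge i : star_elabel [set None; Some i] = g i.
Proof.
rewrite /star_elabel; case: pickP => [j | /(_ i)]; last by rewrite !inE eqxx orbT.
by rewrite !inE => /eqP[->].
Qed.

Hypotheses (g_inj : injective g) (centre_far : forall i, far p x (g i))
  (leaf_neq_centre : forall i, h i != x) (leaf_far : forall i, far p (h i) (g i)).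

Lemma star_total_labelling :
  is_total_labelling (@star_adj n) p star_vlabel star_elabel.
Proof.
split.
- move=> u v; rewrite /star_adj.
  by case: u => [i|]; case: v => [j|] //= _; rewrite // eq_sym.
- move=> _ _ /star_edgeP[i ->] /star_edgeP[j ->] ij _; rewrite !star_elabel_edge.
  by apply: contra ij => /eqP/g_inj ->.
- move=> u _ /star_edgeP[i ->]; rewrite star_elabel_edge !inE.
  by case/orP=> /eqP ->; [apply: centre_far | apply: leaf_far].
Qed.

End StarLabelling.

Theorem theorem3p1 (n p : nat) :
  3 <= n -> 2 <= p ->
  exists2 k : nat, k <= n + 2 * p - 1 & @total_choosable _ (@star_adj n) p k.
Proof.
move=> n_ge3 p_ge2; exists (n + 2 * p - 1) => // Lv Le Lv_ok Le_ok.
have [x x_Lv] : exists x, x \in Lv None.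
  have [_] := Lv_ok None; case: (Lv None) => [|x s] /=; [lia | by exists x; rewrite mem_head].
have [g g_Le g_inj] : exists2 g : 'I_n -> nat,
    forall i, g i \in filter (far p x) (Le [set None; Some i]) & injective g.
  have [|g [g_Le g_inj]] := exists_injective_choice
    (L := fun i => filter (far p x) (Le [set None; Some i])) (enum_uniq 'I_n).
    move=> i _; have [Le_uniq Le_size] := Le_ok _ (star_edge i).
    rewrite filter_uniq // size_enum_ord; split=> //.
    by apply: leq_trans (size_filter_far_ge p x Le_uniq); rewrite Le_size; lia.
  by exists g => [i | i j]; [apply: g_Le | apply: g_inj]; rewrite mem_enum.
have /fin_all_exists2[h h_Lv h_ok] :
    forall i : 'I_n, exists2 y, y \in Lv (Some i) & (y != x) && far p y (g i).
  move=> i; have [? ?] := Lv_ok (Some i).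
  by apply: exists_far_label_neq => //; lia.
exists (star_vlabel x h), (star_elabel g); split; [|split].
- apply: star_total_labelling => // i.
  + by have := g_Le i; rewrite mem_filter => /andP[].
  + by have /andP[] := h_ok i.
  + by have /andP[] := h_ok i.
- by case.
- move=> _ /star_edgeP[i ->]; rewrite star_elabel_edge.
  by have := g_Le i; rewrite mem_filter => /andP[].
Qed.
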